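(* Let $\Omega$ be a completely regular Hausdorff space with Stone–Čech compactification $\beta\Omega$, and let $\mathcal{F}$ be a $z$-filter on $\Omega$. Let $\phi \in C(\Omega, \mathbb{C})$ (with $\phi^\beta:\beta\Omega\to\mathbb{C}\cup\{\infty\}$ its continuous extension and closures taken in $\mathbb{C}\cup\{\infty\}$), or let $\phi \in C(\Omega, X)$, $X$ a locally convex topological vector space, with $\overline{\phi(\Omega)}$ compact (with $\phi^\beta$ its Stone extension to $\beta\Omega$). Then \[ \phi^\beta\Big(\bigcap_{F \in \mathcal{F}}\mathrm{cl}_{\beta}F\Big) = \bigcap_{F \in \mathcal{F}} \phi^\beta(\mathrm{cl}_{\beta}F) = \bigcap_{F \in \mathcal{F}} \overline{\phi(F)}. \]
   Context: $\mathrm{cl}_\beta S$ denotes the closure of $S\subset\Omega$ in $\beta\Omega$. A zero-set of $\Omega$ is $h^{-1}(0)$ for some $h\in C(\Omega,\mathbb{R})$. A $z$-filter on $\Omega$ is a nonempty family $\mathcal{F}$ of zero-sets with $\emptyset\notin\mathcal{F}$, closed under finite intersections, and such that any zero-set containing a member of $\mathcal{F}$ belongs to $\mathcal{F}$. For $f$ continuous with relatively compact range, $f^\beta$ denotes the continuous (Stone) extension of $f$ to $\beta\Omega$ with $f^\beta|_\Omega=f$. *)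

From HB Require Import structures.
From mathcomp Require Import all_boot all_algebra.
From mathcomp Require Import all_classical all_reals all_analysis.
From mathcomp Require Import complex.
Import numFieldNormedType.Exports.

Set Implicit Arguments.
Unset Strict Implicit.
Unset Printing Implicit Defensive.

Local Open Scope classical_set_scope.
Local Open Scope ring_scope.

Definition Cplx (R : realType) : numFieldType := R[i].

Definition zero_set (R : realType) (Om : topologicalType) (Z : set Om) : Prop :=
  exists h : Om -> R, continuous h /\ Z = h @^-1` [set 0].

Definition z_filter (R : realType) (Om : topologicalType) (Fz : set (set Om)) : Prop :=
  [/\ (exists F, Fz F),
      (forall F, Fz F -> zero_set R F),
      ~ Fz set0,
      (forall F G, Fz F -> Fz G -> Fz (F `&` G)) &
      (forall F G, Fz F -> zero_set R G -> F `<=` G -> Fz G)].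

Definition embedding (S T : topologicalType) (e : S -> T) : Prop :=
  [/\ continuous e, injective e &
      (forall U : set S, open U -> exists V : set T, open V /\ e @^-1` V = U)].

Definition stone_cech (Om B : topologicalType) (e : Om -> B) : Prop :=
  [/\ compact [set: B], hausdorff_space B, embedding e,
      closure (range e) = [set: B] &
      (forall (K : topologicalType) (f : Om -> K),
          compact [set: K] -> hausdorff_space K -> continuous f ->
          exists g : B -> K, continuous g /\ (forall x, g (e x) = f x))].

Definition clb (Om B : topologicalType) (e : Om -> B) (S : set Om) : set B :=
  closure (e @` S).

From HB Require Import structures.
From mathcomp Require Import all_boot all_order all_algebra.
From mathcomp Require Import all_classical all_reals all_analysis.
From mathcomp Require Import complex.
Import numFieldNormedType.Exports.
Import Order.TTheory GRing.Theory Num.Theory.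
Local Open Scope classical_set_scope.
Local Open Scope ring_scope.

(* A continuous map [f] from a compact space to a Hausdorff space is closed,
   hence [f (cl A) = cl (f A)]; applied to [phib] with [phib \o e = phi] this
   gives the second equality.  Moreover [f] commutes with intersections of
   downward directed families of closed sets: if [y] lies in every [f C_i],
   the fibres [C_i `&` f^-1 y] form a filter base of nonempty closed sets,
   whose cluster point (by compactness) lies in every [C_i] and maps to [y].
   The sets [cl_beta F], [F] in a z-filter, form such a family.  In the complex
   case the target is the one-point compactification of the locally compact
   space C, which is Hausdorff. *)

Section compact_to_hausdorff.
Variables (T Y : topologicalType) (f : T -> Y).
Hypotheses (cT : compact [set: T]) (hY : hausdorff_space Y) (cf : continuous f).

Lemma closed_image (A : set T) : closed A -> closed (f @` A).
Proof.
move=> clA; apply: compact_closed hY _.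
apply: continuous_compact; first exact: continuous_subspaceT.
exact: subclosed_compact clA cT _.
Qed.

Lemma image_closure (A : set T) : f @` closure A = closure (f @` A).
Proof.
apply/seteqP; split.
  move=> _ [x clAx <-] V fxV.
  have [z [Az Vz]] := clAx _ (cf x V fxV).
  by exists (f z); split => //; exists z.
rewrite [X in _ `<=` X](closure_id _).1; last exact/closed_image/closed_closure.
exact/closureS/image_subset/subset_closure.
Qed.

Lemma image_bigcap_directed (I : Type) (D : set I) (C : I -> set T) :
  (exists i, D i) ->
  (forall i j, D i -> D j -> exists2 k, D k & C k `<=` C i `&` C j) ->
  (forall i, D i -> closed (C i)) ->
  f @` (\bigcap_(i in D) C i) = \bigcap_(i in D) f @` C i.
Proof.
move=> [i0 Di0] C_directed C_closed; apply/seteqP; split.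
  by move=> _ [x Cx <-] i Di; exists x => //; exact: Cx.
move=> y fCy; pose fibre i := C i `&` f @^-1` [set y].
have fibre_closed i : D i -> closed (fibre i).
  move=> Di; apply: closedI (C_closed _ Di) _.
  apply: preimage_closed; first by move=> x _; exact: cf.
  exact/accessible_closed_set1/hausdorff_accessible.
have fibre_filter : ProperFilter (filter_from D fibre).
  apply: filter_from_proper; last by move=> i /fCy [x Cx fx]; exists x.
  apply: filter_from_filter; first by exists i0.
  move=> i j Di Dj; have [k Dk Cij] := C_directed i j Di Dj.
  by exists k => // x [/Cij [Cix Cjx] fx].
have [|p [_ clp]] := cT _ fibre_filter; first exact: filterT.
have fibre_p i : D i -> fibre i p.
  move=> Di; apply: (fibre_closed _ Di) => U pU.
  by apply: (clp (fibre i) U) => //; exists i.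
by exists p; [move=> i /fibre_p [] | case: (fibre_p i0 Di0)].
Qed.

End compact_to_hausdorff.

Lemma image_bigcap_clb (Om B Y : topologicalType) (e : Om -> B)
    (Fz : set (set Om)) (phib : B -> Y) (phi : Om -> Y) :
  compact [set: B] -> hausdorff_space Y -> continuous phib ->
  (forall x, phib (e x) = phi x) ->
  (exists F, Fz F) -> (forall F G, Fz F -> Fz G -> Fz (F `&` G)) ->
  phib @` (\bigcap_(F in Fz) clb e F) = \bigcap_(F in Fz) (phib @` clb e F)
  /\ \bigcap_(F in Fz) (phib @` clb e F) = \bigcap_(F in Fz) closure (phi @` F).
Proof.
move=> cB hY cphib phibe Fz0 FzI; split.
  apply: image_bigcap_directed => // [F G FzF FzG|F _]; last first.
    exact: closed_closure.
  exists (F `&` G); first exact: FzI.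
  rewrite subsetI; split; apply/closureS/image_subset.
    exact: subIsetl.
  exact: subIsetr.
apply: eq_bigcapr => F _.
rewrite /clb image_closure // image_comp.
by congr closure; apply: eq_imagel => x _ /=.
Qed.

Section complex_locally_compact.
Variable R : realType.
Local Open Scope complex_scope.

Lemma normc_real (x : R) : `|x%:C : Cplx R| = `|x|%:C.
Proof. by rewrite normc_def /= expr0n addr0 sqrtr_sqr. Qed.

Lemma normc_ge_Im (z : Cplx R) : `|complex.Im z|%:C <= `|z|.
Proof.
by rewrite normc_def lecR -sqrtr_sqr ler_sqrt ?lerDr ?addr_ge0 ?sqr_ge0.
Qed.

Lemma continuous_real_complex : continuous (fun x : R => x%:C : Cplx R).
Proof.
move=> x; apply/cvgrPdist_lt => e; rewrite ltcE /= => /andP [/eqP Ie0 Re_gt0].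
have -> : e = (complex.Re e)%:C.
  by case: e Ie0 Re_gt0 => a b /= ->.
near=> t; rewrite -raddfB normc_real ltcR.
by near: t; apply: cvgr_dist_lt.
Unshelve. all: by end_near. Qed.

Lemma continuous_complex_of_pair :
  continuous (fun p : R * R => p.1 +i* p.2 : Cplx R).
Proof.
have -> : (fun p : R * R => p.1 +i* p.2 : Cplx R) =
          fun p => p.1%:C + p.2%:C * 'i.
  by apply/funext => -[a b]; apply/eqP; rewrite eq_complex /=; simpc.
move=> p; apply: cvgD; last apply: cvgMr_tmp.
  exact: (continuous_comp cvg_fst (@continuous_real_complex _)).
exact: (continuous_comp cvg_snd (@continuous_real_complex _)).
Qed.

Lemma locally_compact_complex : locally_compact [set: Cplx R].
Proof.
move=> [a b] _; rewrite withinET.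
pose square := (fun p : R * R => p.1 +i* p.2 : Cplx R) @`
  (`[a - 1, a + 1] `*` `[b - 1, b + 1]).
have square_compact : compact square.
  apply: continuous_compact.
    exact/continuous_subspaceT/continuous_complex_of_pair.
  by apply: compact_setX; exact: segment_compact.
exists square; last by split=> //; exact: compact_closed square_compact.
apply/nbhs_ballP; exists 1 => //= -[c d]; rewrite -ball_normE /= => dist_lt1.
exists (c, d) => //; split; rewrite /= in_itv /= -ler_distlC;
  apply/ltW; rewrite -ltcR; apply: le_lt_trans dist_lt1.
  exact: (normc_ge_Re ((a +i* b) - (c +i* d))).
exact: (normc_ge_Im ((a +i* b) - (c +i* d))).
Qed.

End complex_locally_compact.

Theorem lemma2p12 (R : realType) (Om B : topologicalType) (e : Om -> B)
    (Fz : set (set Om)) :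
  hausdorff_space Om -> completely_regular_space Om ->
  stone_cech e -> z_filter R Fz ->
  (forall (phi : Om -> Cplx R)
          (phib : B -> one_point_compactification (Cplx R)),
      continuous phi -> continuous phib ->
      (forall x, phib (e x) = Some (phi x)) ->
      phib @` (\bigcap_(F in Fz) clb e F) = \bigcap_(F in Fz) (phib @` clb e F)
      /\ \bigcap_(F in Fz) (phib @` clb e F)
         = \bigcap_(F in Fz) closure ((fun x => Some (phi x)
             : one_point_compactification (Cplx R)) @` F))
  /\
  (forall (K : numFieldType) (X : tvsType K) (phi : Om -> X) (phib : B -> X),
      hausdorff_space X -> continuous phi -> compact (closure (range phi)) ->
      continuous phib -> (forall x, phib (e x) = phi x) ->
      phib @` (\bigcap_(F in Fz) clb e F) = \bigcap_(F in Fz) (phib @` clb e F)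
      /\ \bigcap_(F in Fz) (phib @` clb e F)
         = \bigcap_(F in Fz) closure (phi @` F)).
Proof.
move=> _ _ [cB _ _ _ _] [Fz0 _ _ FzI _]; split.
  move=> phi phib _ cphib phibe.
  apply: image_bigcap_clb cB _ cphib phibe Fz0 FzI.
  apply: one_point_compactification_hausdorff; last exact: norm_hausdorff.
  exact: locally_compact_complex.
move=> K X phi phib hX _ _ cphib phibe.
exact: image_bigcap_clb cB hX cphib phibe Fz0 FzI.
Qed.
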